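(* For every $k$-terminal digraph $G$ and every pair-set $P\subseteq K\times K$, there exists a reachability-preserving minor $H$ of $G$ with respect to $P$ having $O(k\cdot|P|)$ non-terminal vertices.
   Context: A $k$-terminal digraph is a digraph $G=(V,E)$ with terminal set $K\subset V$, $|K|=k$. A minor of a digraph is obtained by vertex deletions, edge deletions and edge contractions (contracting $(u,v)$ identifies $u$ and $v$, discarding loops), never deleting terminals nor identifying two terminals. For a pair-set $P\subseteq K\times K$, a reachability-preserving minor of $G$ with respect to $P$ is a minor $H$ of $G$ with $K\subseteq V(H)$ such that for every $(s,t)\in P$, $t$ is reachable from $s$ in $H$ iff $t$ is reachable from $s$ in $G$. *)

From mathcomp Require Import all_boot.
Set Implicit Arguments. Unset Strict Implicit. Unset Printing Implicit Defensive.

Section Digraph.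
Variable T : finType.

(* A digraph is a pair (V, E) with V : {set T}; only edges between vertices
   of V count: the actual adjacency relation is [adj V E]. *)
Definition adj (V : {set T}) (E : rel T) : rel T :=
  fun a b => [&& a \in V, b \in V & E a b].

Definition reach (V : {set T}) (E : rel T) (s t : T) : bool :=
  connect (adj V E) s t.

Inductive minor_step (K : {set T}) :
    {set T} -> rel T -> {set T} -> rel T -> Prop :=
  | del_vertex (V : {set T}) (E : rel T) v : v \in V -> v \notin K ->
      minor_step K V E (V :\ v) E
  | del_edge (V : {set T}) (E : rel T) x y : adj V E x y ->
      minor_step K V E V (fun a b => E a b && ((a, b) != (x, y)))
  (* contract an edge between w and z (in either direction), identifying
     them into the vertex w; z must not be a terminal (so terminals are
     never deleted nor identified with each other); loops are discarded. *)
  | contract_edge (V : {set T}) (E : rel T) w z : (adj V E w z || adj V E z w) -> w != z ->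
      z \notin K ->
      minor_step K V E (V :\ z)
        (fun a b => (a != b) &&
           [|| E a b, (a == w) && E z b | (b == w) && E a z]).

Inductive minor (K : {set T}) : {set T} -> rel T -> {set T} -> rel T -> Prop :=
  | minor_refl (V : {set T}) (E : rel T) : minor K V E V E
  | minor_trans (V : {set T}) (E : rel T) (V1 : {set T}) (E1 : rel T) (V2 : {set T}) (E2 : rel T) :
      minor_step K V E V1 E1 -> minor K V1 E1 V2 E2 -> minor K V E V2 E2.

Definition rp_minor (K : {set T}) (P : {set T * T})
    (V : {set T}) (E : rel T) (VH : {set T}) (EH : rel T) : Prop :=
  [/\ minor K V E VH EH, K \subset VH &
      forall s t, (s, t) \in P -> reach VH EH s t = reach V E s t].

End Digraph.

(* Take a minor H of G that preserves P-reachability and is minimal with this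
   property: every single minor operation on H changes the reachability of
   some pair of P.  Let v be a non-terminal of H.  Deleting v breaks a pair,
   so v has an in-neighbour a; deleting the edge (a, v) breaks a pair (s, t),
   so (a, v) lies on every s-t path; contracting (a, v) creates a new pair
   (r, t'), so r reaches v and a reaches t' although r does not reach t'.
   The label v |-> ((s, t), r) in P x K is injective: if distinct v and w
   share it, with critical edges (a, v) and (b, w), then v reaches b or w
   reaches a, and either way r reaches the target it was shown not to reach.
   Hence H has at most |K| |P| non-terminals. *)

From mathcomp Require Import all_boot zify.
From Stdlib Require Import Classical.
Set Implicit Arguments. Unset Strict Implicit. Unset Printing Implicit Defensive.

Section Connect.
Variable T : finType.
Implicit Types (e : rel T) (s t u w v a b p q : T).

Lemma connect_ind e (Q : T -> Prop) x y :
  Q x -> (forall u w, Q u -> e u w -> Q w) -> connect e x y -> Q y.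
Proof.
move=> Qx Qe /connectP[p + ->]; elim: p x Qx => [|z p IHp] x Qx //= /andP[exz].
exact/IHp/(Qe _ _ Qx exz).
Qed.

Lemma connect_homo e e' (f : T -> T) :
  (forall u w, e u w -> connect e' (f u) (f w)) ->
  forall x y, connect e x y -> connect e' (f x) (f y).
Proof.
move=> fe x y; apply: (connect_ind (Q := fun y => connect e' (f x) (f y))) => //.
by move=> u w fxu /fe; apply: connect_trans.
Qed.

Lemma connect_cut_vertex e s t v :
  s != v -> connect e s t -> ~~ connect [rel x y | [&& x != v, y != v & e x y]] s t ->
  exists2 a, a != v & e a v.
Proof.
set e' := [rel x y | _]; move=> sv est ncut.
pose Q y := (y != v /\ connect e' s y) \/ exists2 a, a != v & e a v.
have : Q t.
  apply: (connect_ind (Q := Q) _ _ est); first by left.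
  move=> u w; rewrite /Q => -[[uv su]|in_edge] euw; last by right.
  have [wv|wv] := eqVneq w v; first by subst w; right; exists u.
  by left; split=> //; apply: connect_trans su (connect1 _); rewrite /= uv wv.
by case=> // -[_ st]; rewrite st in ncut.
Qed.

Definition edge_del e p q : rel T := fun x y => e x y && ((x, y) != (p, q)).

Lemma connect_edge_del e p q x y : connect (edge_del e p q) x y -> connect e x y.
Proof. by apply: connect_sub => u w /andP[euw _]; apply: connect1. Qed.

Lemma connect_edge_del_src e p q s t :
  connect e s t -> ~~ connect (edge_del e p q) s t -> connect (edge_del e p q) s p.
Proof.
move=> est; apply: contraNT => nsp.
apply: (connect_ind (Q := connect (edge_del e p q) s) _ _ est) => // u w su euw.
have [[up _]|ne] := eqVneq (u, w) (p, q); first by move: su; rewrite up (negbTE nsp).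
by apply: connect_trans su (connect1 _); rewrite /edge_del euw ne.
Qed.

Lemma connect_edge_del_dst e p q s t :
  connect e s t -> ~~ connect (edge_del e p q) s t -> connect (edge_del e p q) q t.
Proof.
have rev_del : edge_del [rel x y | e y x] q p =2 [rel x y | edge_del e p q y x].
  by move=> x y; rewrite /edge_del /= !xpair_eqE [(x == q) && _]andbC.
have := connect_edge_del_src (e := [rel x y | e y x]) (p := q) (q := p) (s := t) (t := s).
by rewrite !(eq_connect rev_del) !(connect_rev (edge_del e p q)) (connect_rev e).
Qed.

Definition critical_edge e a v s t := connect e s t && ~~ connect (edge_del e a v) s t.

Lemma critical_edges_linked e s t a v b w :
  e b w -> (b, w) != (a, v) -> critical_edge e a v s t -> critical_edge e b w s t ->
  connect e v b \/ connect e w a.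
Proof.
move=> ebw ne /andP[est ncut_av] /andP[_ ncut_bw].
have /connect_edge_del sb := connect_edge_del_src est ncut_bw.
have /connect_edge_del wt := connect_edge_del_dst est ncut_bw.
have [sb'|nsb] := boolP (connect (edge_del e a v) s b); last first.
  by left; apply: connect_edge_del (connect_edge_del_dst sb nsb).
have [wt'|nwt] := boolP (connect (edge_del e a v) w t); last first.
  by right; apply: connect_edge_del (connect_edge_del_src wt nwt).
case/negP: ncut_av; apply: connect_trans sb' (connect_trans (connect1 _) wt').
by rewrite /edge_del ebw ne.
Qed.

End Connect.

Section Digraph.
Variables (T : finType) (V : {set T}) (E : rel T).
Implicit Types (s t u v w x y a : T).

Lemma adj_edge_del a v : adj V (edge_del E a v) =2 edge_del (adj V E) a v.
Proof. by move=> x y; rewrite /adj /edge_del !andbA. Qed.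

Lemma adj_setD1 v : adj (V :\ v) E =2 [rel x y | [&& x != v, y != v & adj V E x y]].
Proof. by move=> x y; rewrite /adj /= !in_setD1; do 2!case: (_ != v); rewrite ?andbF. Qed.

Lemma reach_setD1 v s t : reach (V :\ v) E s t -> reach V E s t.
Proof.
by apply: connect_sub => x y; rewrite adj_setD1 => /and3P[_ _ /connect1].
Qed.

Definition contract_rel w z : rel T := fun a b => (a != b) &&
  [|| E a b, (a == w) && E z b | (b == w) && E a z].

Lemma reach_contract w z x y : w \in V -> w != z -> x != z -> y != z ->
  reach V E x y -> reach (V :\ z) (contract_rel w z) x y.
Proof.
move=> wV wz xz yz; pose f u := if u == z then w else u.
have fV u : u \in V -> f u \in V :\ z.
  by rewrite /f in_setD1; case: (eqVneq u z) => [_|uz] uV /=; rewrite ?wz ?uz.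
have /connect_homo/(_ x y) : forall u u', adj V E u u' ->
    reach (V :\ z) (contract_rel w z) (f u) (f u').
  move=> u u' /and3P[uV u'V Euu'].
  have [->|ne] := eqVneq (f u) (f u'); first exact: connect0.
  apply: connect1; rewrite /adj !fV //= /contract_rel ne.
  move: ne; rewrite /f.
  by case: (eqVneq u z) => [uz|_]; case: (eqVneq u' z) => [u'z|_]; subst;
     rewrite ?eqxx //= ?Euu' ?orbT.
by rewrite /f /= (negbTE xz) (negbTE yz).
Qed.

Lemma reach_contract_inv w z x y : adj V E w z ->
  reach (V :\ z) (contract_rel w z) x y ->
  reach V E x y \/ reach V E x z /\ reach V E w y.
Proof.
move=> Ewz xy; have /and3P[wV zV _] := Ewz.
apply: (connect_ind (Q := fun c => reach V E x c \/ reach V E x z /\ reach V E w c) _ _ xy).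
  by left; apply: connect0.
move=> u u' Qu /and3P[]; rewrite !in_setD1 => /andP[_ uV] /andP[_ u'V] /andP[_].
case/or3P=> [Euu'|/andP[/eqP uw Ezu']|/andP[/eqP u'w Euz]].
- have uu' : adj V E u u' by rewrite /adj uV u'V.
  case: Qu => [xu|[xz wu]]; [left|right; split=> //]; exact: connect_trans (connect1 uu').
- have zu' : adj V E z u' by rewrite /adj zV u'V.
  subst u; left; case: Qu => [xw|[xz _]]; last exact: connect_trans xz (connect1 zu').
  exact: connect_trans xw (connect_trans (connect1 Ewz) (connect1 zu')).
- have uz : adj V E u z by rewrite /adj uV zV.
  subst u'; right; split; last exact: connect0.
  by case: Qu => [xu|[]//]; exact: connect_trans xu (connect1 uz).
Qed.

End Digraph.

Lemma neq_of_imply (b1 b2 : bool) : (b1 -> b2) -> b1 != b2 -> ~~ b1 && b2.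
Proof. by case: b1; case: b2 => // /(_ isT). Qed.

Section Minimal.
Variables (T : finType) (K : {set T}) (P : {set T * T}).

Definition rp_minimal (V : {set T}) (E : rel T) := forall V1 E1,
  minor_step K V E V1 E1 -> exists2 st, st \in P & reach V1 E1 st.1 st.2 != reach V E st.1 st.2.

Variables (V : {set T}) (E : rel T).
Hypothesis PK : P \subset setX K K.
Hypothesis minimal : rp_minimal V E.

Lemma terminals_of_pair st : st \in P -> st.1 \in K /\ st.2 \in K.
Proof. by case: st => s t /(subsetP PK); rewrite in_setX => /andP. Qed.

Lemma minimal_in_edge v : v \in V -> v \notin K -> exists2 a, a != v & adj V E a v.
Proof.
move=> vV vK; have [[s t] /terminals_of_pair[sK _] /=] := minimal (del_vertex E vV vK).
move=> /(neq_of_imply (@reach_setD1 _ V E v s t))/andP[ncut st].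
have sv : s != v by apply: contraNneq vK => <-.
by apply: connect_cut_vertex sv st _; rewrite -(eq_connect (adj_setD1 V E v)).
Qed.

Lemma minimal_critical_edge a v :
  adj V E a v -> exists2 st, st \in P & critical_edge (adj V E) a v st.1 st.2.
Proof.
move=> Eav; have [[s t] Pst /=] := minimal (del_edge K Eav).
rewrite /reach (eq_connect (adj_edge_del V E a v)).
move=> /(neq_of_imply (@connect_edge_del _ _ a v s t))/andP[ncut st].
by exists (s, t); rewrite //= /critical_edge st ncut.
Qed.

Lemma minimal_contract a v : adj V E a v -> a != v -> v \notin K ->
  exists2 st, st \in P & [&& ~~ reach V E st.1 st.2, reach V E st.1 v & reach V E a st.2].
Proof.
move=> Eav av vK; have Eav' : adj V E a v || adj V E v a by rewrite Eav.
have [[s t] /[dup] Pst /terminals_of_pair[sK tK] /=] := minimal (contract_edge Eav' av vK).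
have sv : s != v by apply: contraNneq vK => <-.
have tv : t != v by apply: contraNneq vK => <-.
have aV : a \in V by case/and3P: Eav.
rewrite eq_sym => /(neq_of_imply (@reach_contract _ V E a v s t aV av sv tv)).
case/andP=> nst /(reach_contract_inv Eav)[st|[s_v a_t]]; first by rewrite st in nst.
by exists (s, t); rewrite //= nst s_v a_t.
Qed.

Definition vertex_label v (x : (T * T) * T) : bool :=
  [exists a, [&& adj V E a v, x.1 \in P, critical_edge (adj V E) a v x.1.1 x.1.2 &
     [exists t, [&& (x.2, t) \in P, ~~ reach V E x.2 t, reach V E x.2 v & reach V E a t]]]].

Lemma minimal_vertex_label v : v \in V -> v \notin K -> exists x, vertex_label v x.
Proof.
move=> vV vK; have [a av Eav] := minimal_in_edge vV vK.
have [st Pst crit] := minimal_critical_edge Eav.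
have [[s t] Pst' /and3P[nst s_v a_t]] := minimal_contract Eav av vK.
exists (st, s); apply/existsP; exists a; rewrite Eav Pst crit /=.
by apply/existsP; exists t; rewrite Pst' nst s_v a_t.
Qed.

Lemma vertex_label_inj v w x : vertex_label v x -> vertex_label w x -> v = w.
Proof.
move=> /existsP[a /and4P[Eav _ crit_av /existsP[tv /and4P[_ nrtv rv atv]]]].
move=> /existsP[b /and4P[Ebw _ crit_bw /existsP[tw /and4P[_ nrtw rw btw]]]].
apply/eqP/contraT => vw; have ne : (b, w) != (a, v) by apply: contraNneq vw => -[_ ->].
case: (critical_edges_linked Ebw ne crit_av crit_bw) => [vb|wa].
  by move: nrtw; rewrite /reach (connect_trans rv (connect_trans vb btw)).
by move: nrtv; rewrite /reach (connect_trans rw (connect_trans wa atv)).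
Qed.

Lemma card_nonterminals_minimal : #|V :\: K| <= #|K| * #|P|.
Proof.
pose f v := odflt ((v, v), v) [pick x | vertex_label v x].
have f_label v : v \in V :\: K -> vertex_label v (f v).
  rewrite inE => /andP[vK vV]; rewrite /f; case: pickP => // no_label.
  by have [x] := minimal_vertex_label vV vK; rewrite no_label.
have f_inj : {in V :\: K &, injective f}.
  by move=> v w /f_label vx /f_label wx fvw; apply: vertex_label_inj vx _; rewrite fvw.
have f_sub : f @: (V :\: K) \subset setX P K.
  apply/subsetP => _ /imsetP[v /f_label + ->]; case: (f v) => st s.
  move=> /existsP[a /and4P[_ Pst _ /existsP[t /andP[/terminals_of_pair[sK _] _]]]].
  by rewrite in_setX Pst.
by rewrite mulnC -cardsX -(card_in_imset f_inj) subset_leq_card.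
Qed.

End Minimal.

Section Reduction.
Variable T : finType.
Implicit Types (K V : {set T}) (E : rel T).

Definition edge_set V E := [set p : T * T | adj V E p.1 p.2].

(* A contraction may create edges, so a vertex must outweigh any edge set. *)
Definition digraph_size V E := #|V| * #|{: T * T}|.+1 + #|edge_set V E|.

Lemma minor_step_size K V E V1 E1 :
  minor_step K V E V1 E1 -> digraph_size V1 E1 < digraph_size V E.
Proof.
have edges_max V' E' : #|edge_set V' E'| <= #|{: T * T}| by apply: max_card.
move=> step; have := edges_max V1 E1; have := edges_max V E; rewrite /digraph_size.
case: step => {V E V1 E1} [V E v vV _|V E x y Exy|V E w z Ewz _ _].
- by rewrite (cardsD1 v V) vV; nia.
- move=> _ _; rewrite ltn_add2l; apply/proper_card/properP; split.
    by apply/subsetP => p; rewrite !inE /adj => /and3P[-> -> /andP[-> _]].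
  by exists (x, y); rewrite inE // /adj /= eqxx !andbF.
- have zV : z \in V by case/orP: Ewz => /and3P[].
  by rewrite (cardsD1 z V) zV; nia.
Qed.

Lemma minor_step_terminals K V E V1 E1 :
  minor_step K V E V1 E1 -> K \subset V -> K \subset V1.
Proof.
case=> {V E V1 E1} // [V E v _ vK|V E _ v _ _ vK] KV;
  by apply/subsetP => u uK; rewrite in_setD1 (subsetP KV) // andbT;
     apply: contraNneq vK => <-.
Qed.

Lemma exists_rp_minimal_minor K P V E : K \subset V ->
  exists VH EH, rp_minor K P V E VH EH /\ rp_minimal K P VH EH.
Proof.
have [n] := ubnP (digraph_size V E); elim: n V E => // n IHn V E size_lt KV.
have [[V1 [E1 [step1 same1]]]|no_step] := classic (exists V1 E1,
  minor_step K V E V1 E1 /\ forall st, st \in P -> reach V1 E1 st.1 st.2 = reach V E st.1 st.2).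
  have size1 : digraph_size V1 E1 < n by have := minor_step_size step1; lia.
  have [VH [EH [[minorH KVH sameH] minimalH]]] := IHn _ _ size1 (minor_step_terminals step1 KV).
  exists VH, EH; split=> //; split=> //; first exact: minor_trans step1 minorH.
  by move=> s t Pst; rewrite sameH // (same1 (s, t)).
exists V, E; split; first by split=> //; apply: minor_refl.
move=> V1 E1 step1; apply: NNPP => same1; apply: no_step; exists V1, E1; split=> //.
by move=> st Pst; apply/eqP/negPn/negP => ne; apply: same1; exists st.
Qed.

End Reduction.

Theorem mainTheorem7 :
  exists c : nat,
  forall (T : finType) (V : {set T}) (E : rel T) (K : {set T})
         (P : {set T * T}),
    K \subset V -> P \subset setX K K ->
    exists (VH : {set T}) (EH : rel T),
      rp_minor K P V E VH EH /\
      #|VH :\: K| <= c * (#|K| * #|P|).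
Proof.
exists 1 => T V E K P KV PK.
have [VH [EH [rpH minimalH]]] := exists_rp_minimal_minor P E KV.
by exists VH, EH; rewrite mul1n; split=> //; exact: card_nonterminals_minimal PK minimalH.
Qed.
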